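(* Let $S_1,S_2$ be numerical semigroups and $a_1,a_2$ coprime positive integers with $a_2\in S_1$ and $a_1\in S_2$, and let $S=a_1S_1+a_2S_2$. Then $S_1\le_P S$ and $S_2\le_P S$, in each case with a relating polynomial having nonnegative integer coefficients; i.e. for $i=1,2$ there exist an integer $w_i\ge1$ and $f_i\in\mathbb N[x]$ with $\mathrm H_{S_i}(x^{w_i})f_i(x)=\mathrm H_S(x)$.
   Context: A numerical semigroup is a submonoid of $(\mathbb N,+)$ with finite complement in $\mathbb N$; $aA=\{ax:x\in A\}$, $A+B=\{x+y:x\in A,y\in B\}$. $\mathrm H_S(x)=\sum_{s\in S}x^s$. Numerical semigroups $S,T$ are polynomially related, $S\le_P T$, if there exist $f\in\mathbb Z[x]$ and an integer $w\ge1$ with $\mathrm H_S(x^w)f(x)=\mathrm H_T(x)$. $\mathbb N[x]$ denotes polynomials with nonnegative integer coefficients. (In the paper, $S$ is called the gluing $a_1S_1+_{a_1a_2}a_2S_2$.) *)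

From mathcomp Require Import all_boot all_order all_algebra.
Set Implicit Arguments. Unset Strict Implicit. Unset Printing Implicit Defensive.
Import Order.TTheory GRing.Theory Num.Theory.

Definition numerical_semigroup (S : pred nat) : Prop :=
  [/\ S 0,
      (forall x y, S x -> S y -> S (x + y)) &
      exists N, forall n, N <= n -> S n].

(* Formal power series with integer coefficients are represented by their
   coefficient sequences nat -> int. *)

(* Coefficients of the Hilbert series H_S(x) = \sum_{s in S} x^s. *)
Definition hilbert (S : pred nat) (n : nat) : int :=
  if S n then 1%R else 0%R.

(* Coefficients of the power series H_S(x^w) * f(x), for f a polynomial:
   the n-th coefficient is \sum_{k <= n} f_k * [x^(n-k)] H_S(x^w). *)
Definition hilbert_subst_mul (S : pred nat) (w : nat) (f : {poly int})
  (n : nat) : int :=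
  (\sum_(k < n.+1)
     f`_k * (if ((w %| (n - k))%N && S ((n - k) %/ w)%N) then 1 else 0))%R.

Definition poly_related (S T : pred nat) : Prop :=
  exists (w : nat) (f : {poly int}),
    1 <= w /\ forall n, hilbert_subst_mul S w f n = hilbert T n.

Definition poly_related_nat (S T : pred nat) : Prop :=
  exists (w : nat) (f : {poly int}),
    [/\ 1 <= w, (forall i, (0 <= f`_i)%R) &
        forall n, hilbert_subst_mul S w f n = hilbert T n].

(* Let [Ap] be the Apéry set of [S2] with respect to [a1]: the elements [y] of
   [S2] with [y - a1] not in [S2].  Every element of [S2] is [y + t a1] with
   [y] in [Ap], and [a2 t a1 = a1 (t a2)] with [t a2] in [S1], hence
   [S = a1 S1 + a2 Ap].  Coprimality of [a1] and [a2] makes this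
   decomposition unique, since distinct Apéry elements are incongruent
   modulo [a1].  In series form [H_S(x) = H_S1(x^a1) f(x)] with
   [f = \sum_(y in Ap) x^(a2 y)], a polynomial because [Ap] is finite. *)
From mathcomp Require Import all_boot all_order all_algebra.
From mathcomp Require Import zify.
Set Implicit Arguments. Unset Strict Implicit. Unset Printing Implicit Defensive.
Import Order.TTheory GRing.Theory Num.Theory.

Section Apery.

Variables (T : pred nat) (m : nat).
Hypothesis addT : forall x y, T x -> T y -> T (x + y).

Definition apery y := T y && ~~ ((m <= y) && T (y - m)).

Lemma addn_mul_closed x t : T m -> T x -> T (x + t * m).
Proof.
move=> Tm; elim: t => [|t IHt] Tx; first by rewrite addn0.
by rewrite mulSn addnCA addnC; apply: addT => //; apply: IHt.
Qed.

Lemma apery_decomposition y :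
  0 < m -> T y -> exists2 y0, apery y0 & exists t, y = y0 + t * m.
Proof.
move=> m_gt0; elim: y {-2}y (leqnn y) => [|n IHn] y le_y_n Ty.
  exists y; last by exists 0; rewrite addn0.
  by move: le_y_n; rewrite leqn0 /apery Ty => /eqP ->; rewrite leqNgt m_gt0.
case Ay: (apery y); first by exists y => //; exists 0; rewrite addn0.
move: Ay; rewrite /apery Ty /= => /negbFE /andP [le_m_y Tym].
have [y0 Ay0 [t def_ym]] := IHn (y - m) ltac:(lia) Tym.
by exists y0 => //; exists t.+1; lia.
Qed.

Lemma apery_eq_mod y y' :
  T m -> apery y -> apery y' -> y = y' %[mod m] -> y = y'.
Proof.
move=> Tm; wlog le_yy' : y y' / y <= y'.
  move=> wlog_le Ay Ay' eq_mod; case: (leqP y y') => [le_yy' | /ltnW le_y'y].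
    exact: wlog_le.
  by symmetry; apply: wlog_le.
move=> /andP [Ty _] /andP [_ /negP not_Ty'm] /eqP.
rewrite eq_sym eqn_mod_dvd // => /dvdnP [[|t] def_t]; first lia.
exfalso; apply: not_Ty'm; apply/andP; split; first lia.
have -> : y' - m = y + t * m by lia.
exact: addn_mul_closed.
Qed.

Lemma apery_lt N y : (forall n, N <= n -> T n) -> apery y -> y < N + m.
Proof.
move=> cofinite /andP [_ /negP not_Tym]; rewrite ltnNge; apply/negP => le_y.
by apply: not_Tym; apply/andP; split; [lia | apply: cofinite; lia].
Qed.

End Apery.

Lemma hilbert_subst_mul_card (T A : pred nat) w (f : {poly int}) n :
  (forall k, f`_k = (A k : nat)%:R)%R ->
  hilbert_subst_mul T w f n =
  (#|[pred k : 'I_n.+1 | [&& A k, w %| n - k & T ((n - k) %/ w)]]|%N)%:R%R.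
Proof.
move=> coef_f; rewrite /hilbert_subst_mul -sum1_card natr_sum [RHS]big_mkcond.
apply: eq_bigr => k _; rewrite coef_f /=.
by rewrite inE; case: (A k); case: (_ && _); rewrite ?mul1r ?mul0r.
Qed.

Section Gluing.

Variables (S1 S2 S : pred nat) (a1 a2 : nat).
Hypothesis addS1 : forall x y, S1 x -> S1 y -> S1 (x + y).
Hypothesis addS2 : forall x y, S2 x -> S2 y -> S2 (x + y).
Hypotheses (a1_gt0 : 0 < a1) (a2_gt0 : 0 < a2) (coprime_a1a2 : coprime a1 a2).
Hypotheses (S1a2 : S1 a2) (S2a1 : S2 a1).
Hypothesis memS :
  forall n, S n <-> exists x y, [/\ S1 x, S2 y & n = a1 * x + a2 * y].

Lemma mem_gluing_apery n :
  S n <-> exists x y, [/\ S1 x, apery S2 a1 y & n = a1 * x + a2 * y].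
Proof.
rewrite memS; split=> [[x [y [S1x S2y ->]]] | [x [y [S1x /andP [S2y _] ->]]]];
  last by exists x, y.
have [y0 Ay0 [t ->]] := apery_decomposition a1_gt0 S2y.
exists (x + t * a2), y0; split=> //; first exact: addn_mul_closed.
lia.
Qed.

Lemma gluing_apery_unique x y x' y' :
  apery S2 a1 y -> apery S2 a1 y' ->
  a1 * x + a2 * y = a1 * x' + a2 * y' -> y = y'.
Proof.
wlog le_yy' : x y x' y' / y <= y'.
  move=> wlog_le Ay Ay' eq_n; case: (leqP y y') => [le_yy' | /ltnW le_y'y].
    exact: wlog_le eq_n.
  by symmetry; apply: (wlog_le x' y' x y).
move=> Ay Ay' eq_n; apply: (apery_eq_mod addS2 S2a1 Ay Ay'); apply/eqP.
rewrite eq_sym eqn_mod_dvd // -(Gauss_dvdr _ coprime_a1a2).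
by apply/dvdnP; exists (x - x'); nia.
Qed.

Definition scaled_apery k := (a2 %| k) && apery S2 a1 (k %/ a2).

Lemma gluing_indexP n k :
  k < n.+1 ->
  reflect (exists x y, [/\ S1 x, apery S2 a1 y, k = a2 * y & n = a1 * x + a2 * y])
          [&& scaled_apery k, a1 %| n - k & S1 ((n - k) %/ a1)].
Proof.
move=> lt_kn; apply: (iffP and3P).
- move=> [/andP [/dvdnP [y def_k] Ay] /dvdnP [x def_nk] S1x].
  move: Ay S1x; rewrite def_nk def_k !mulnK // => Ay S1x.
  by exists x, y; split => //; lia.
- move=> [x [y [S1x Ay def_k def_n]]].
  have def_nk : n - k = a1 * x by lia.
  by rewrite /scaled_apery def_nk def_k !dvdn_mulr // !mulKn.
Qed.

Lemma card_gluing_index n :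
  #|[pred k : 'I_n.+1 | [&& scaled_apery k, a1 %| n - k & S1 ((n - k) %/ a1)]]|
  = S n.
Proof.
case Sn: (S n).
- have [x [y [S1x Ay def_n]]] := (mem_gluing_apery n).1 Sn.
  have lt_k : a2 * y < n.+1 by lia.
  apply: (eq_card1 (x := Ordinal lt_k)) => k; rewrite !inE.
  apply/(gluing_indexP (ltn_ord k))/eqP => [[x' [y' [_ Ay' def_k def_n']]] | ->].
    apply: val_inj; rewrite /= def_k; congr (a2 * _).
    by apply: (gluing_apery_unique (x := x') (x' := x) Ay' Ay); rewrite -def_n'.
  by exists x, y.
- apply: eq_card0 => k; rewrite inE.
  apply/(gluing_indexP (ltn_ord k)) => [[x [y [S1x Ay _ def_n]]]].
  by move: Sn; have -> : S n by apply/mem_gluing_apery; exists x, y.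
Qed.

Lemma gluing_poly_related_nat N :
  (forall n, N <= n -> S2 n) -> poly_related_nat S1 S.
Proof.
move=> S2_cofinite.
pose f : {poly int} := (\poly_(k < (a2 * (N + a1))%N) (scaled_apery k : nat)%:R)%R.
have coef_f k : (f`_k = (scaled_apery k : nat)%:R)%R.
  rewrite coef_poly; case: ltnP => // le_bound.
  case Ak: (scaled_apery k) => //; move: Ak => /andP [_ /(apery_lt S2_cofinite)].
  by rewrite ltn_divLR // mulnC ltnNge le_bound.
exists a1, f; split=> // [k | n]; first by rewrite coef_f.
by rewrite (hilbert_subst_mul_card _ _ _ coef_f) card_gluing_index /hilbert; case: (S n).
Qed.

End Gluing.

Theorem theorem6 (S1 S2 S : pred nat) (a1 a2 : nat) :
  numerical_semigroup S1 -> numerical_semigroup S2 ->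
  0 < a1 -> 0 < a2 -> coprime a1 a2 ->
  S1 a2 -> S2 a1 ->
  (forall n, S n <-> exists x y, [/\ S1 x, S2 y & n = a1 * x + a2 * y]) ->
  poly_related_nat S1 S /\ poly_related_nat S2 S.
Proof.
move=> [_ addS1 [N1 S1_cofinite]] [_ addS2 [N2 S2_cofinite]] a1_gt0 a2_gt0.
move=> coprime_a1a2 S1a2 S2a1 memS.
split.
  exact: (gluing_poly_related_nat addS1 addS2 a1_gt0 a2_gt0 coprime_a1a2
            S1a2 S2a1 memS S2_cofinite).
have memS_sym n : S n <-> exists y x, [/\ S2 y, S1 x & n = a2 * y + a1 * x].
  split=> [/memS [x [y [S1x S2y ->]]] | [y [x [S2y S1x ->]]]].
    by exists y, x; split=> //; apply: addnC.
  by apply/memS; exists x, y; split=> //; apply: addnC.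
rewrite coprime_sym in coprime_a1a2.
exact: (gluing_poly_related_nat addS2 addS1 a2_gt0 a1_gt0 coprime_a1a2
          S2a1 S1a2 memS_sym S1_cofinite).
Qed.
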